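(* Let $f:\mathcal D\subset\Omega\times(0,\infty)\to\Omega\times(0,\infty)$ be a measure-preserving embedding, and suppose there is $W\in\mathcal C^1_\psi(\Omega\times(0,\infty))$ and constants $\beta,\delta>0$ with $0<\beta\le\partial_rW(\omega,r)\le\delta$ for all $(\omega,r)\in\Omega\times(0,\infty)$ and $W(f(\omega,r))\le W(\omega,r)+k(r)$ for all $(\omega,r)\in\mathcal D$, where $k:(0,\infty)\to\mathbb R$ is decreasing, bounded, with $\lim_{r\to\infty}k(r)=0$. Let $(\epsilon_j)_{j\in\mathbb N}$, $(W_j)_{j\in\mathbb N}$ be sequences of positive numbers with $\sum_j\epsilon_j<\infty$, $\lim_{j\to\infty}W_j=\infty$ and $\lim_{j\to\infty}\epsilon_j^{-1}k\big(\tfrac{1}{4\delta}W_j\big)=0$. Put $$\mathcal A=\bigcup_{j\in\mathbb N}\mathcal A_j,\qquad \mathcal A_j=\{(\omega,r)\in\Omega\times(0,\infty):|W(\omega,r)-W_j|\le\epsilon_j\}.$$ Then $(\mu_\Omega\otimes\lambda)(\mathcal A)<\infty$, and for every $(\omega_0,r_0)\in\mathcal U$ there is $K\in\mathbb N$ with $(\omega_K,r_K)=f^K(\omega_0,r_0)\in\mathcal A$.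
   Context: $\Omega$ is a commutative (written additively), compact, metrizable topological group, and $\psi:\mathbb R\to\Omega$ is a continuous group homomorphism with $\psi(\mathbb R)$ dense. $\mu_\Omega$ is the Haar probability measure of $\Omega$ and $\lambda$ Lebesgue measure on $\mathbb R$. For $U:\Omega\to\mathbb R$, $\partial_\psi U(\omega)=\lim_{t\to0}\frac{U(\omega+\psi(t))-U(\omega)}{t}$; $\mathcal C^1_\psi(\Omega)$ is the space of continuous $U$ with $\partial_\psi U$ existing everywhere and continuous; $\mathcal C^1_\psi(\Omega\times(0,\infty))$ is the set of $W(\omega,r)$ with $W(\cdot,r)\in\mathcal C^1_\psi(\Omega)$ for all $r$ and $W(\omega,\cdot)\in\mathcal C^1(0,\infty)$ for all $\omega$. A measure-preserving embedding is a continuous injective map $f:\mathcal D\to\Omega\times(0,\infty)$, $\mathcal D\subset\Omega\times(0,\infty)$ open, with $(\mu_\Omega\otimes\lambda)(f(\mathcal B))=(\mu_\Omega\otimes\lambda)(\mathcal B)$ for Borel $\mathcal B\subset\mathcal D$. Set $\mathcal D_1=\mathcal D$, $\mathcal D_{n+1}=f^{-1}(\mathcal D_n)$, $\mathcal D_\infty=\bigcap_n\mathcal D_n$; for $(\omega_0,r_0)\in\mathcal D_\infty$ write $(\omega_n,r_n)=f^n(\omega_0,r_0)$, and $\mathcal U=\{(\omega_0,r_0)\in\mathcal D_\infty:\limsup_{n\to\infty}r_n=\infty\}$. *)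

From HB Require Import structures.
From mathcomp Require Import all_boot all_order all_algebra.
From mathcomp Require Import all_classical all_reals all_analysis.
Set Implicit Arguments. Unset Strict Implicit. Unset Printing Implicit Defensive.
Import Order.TTheory GRing.Theory Num.Theory.
Import numFieldNormedType.Exports.
Local Open Scope classical_set_scope.
Local Open Scope ring_scope.

Definition metrizable_space {R : realType} (T : topologicalType) :=
  exists d : T -> T -> R,
    [/\ (forall x y, 0 <= d x y),
        (forall x y, d x y = 0 <-> x = y),
        (forall x y, d x y = d y x),
        (forall x y z, d x z <= d x y + d y z) &
        (forall x, nbhs x = [set A | exists2 e : R, 0 < e & [set y | d x y < e] `<=` A])].

Definition ptZ (T : topologicalZmodType) : Type := T.
HB.instance Definition _ (T : topologicalZmodType) := Choice.on (ptZ T).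
HB.instance Definition _ (T : topologicalZmodType) :=
  isPointed.Build (ptZ T) (0 : T).
Definition open_ptZ (T : topologicalZmodType) : set (set (ptZ T)) := @open T.
Arguments open_ptZ : clear implicits.
Notation borelT X := (g_sigma_algebraType (open_ptZ X)).

Definition psi_deriv {R : realType} {Om : topologicalZmodType}
  (psi : R -> Om) (U : Om -> R) (w : Om) (l : R) : Prop :=
  (fun t : R => (U (w + psi t) - U w) / t) @ 0^' --> l.

Definition C1psi {R : realType} {Om : topologicalZmodType}
  (psi : R -> Om) (U : Om -> R) : Prop :=
  continuous U /\
  exists dU : Om -> R, (forall w, psi_deriv psi U w (dU w)) /\ continuous dU.

Definition C1pos {R : realType} (g : R -> R) : Prop :=
  (forall r, 0 < r -> derivable g r 1) /\
  {in `]0, +oo[, continuous (derive1 g)}.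

Definition C1psi_prod {R : realType} {Om : topologicalZmodType}
  (psi : R -> Om) (W : Om * R -> R) : Prop :=
  (forall r, 0 < r -> C1psi psi (fun w => W (w, r))) /\
  (forall w, C1pos (fun r => W (w, r))).

Definition Dinf {T : Type} (f : T -> T) (D : set T) : set T :=
  [set p | forall n, D (iter n f p)].

Definition Uset {R : realType} {Om : Type} (f : Om * R -> Om * R)
  (D : set (Om * R)) : set (Om * R) :=
  [set p | Dinf f D p /\ limn_esup (fun n => ((iter n f p).2)%:E) = +oo%E].

From HB Require Import structures.
From mathcomp Require Import all_boot all_order all_algebra.
From mathcomp Require Import all_classical all_reals all_analysis.
From mathcomp Require Import ring lra measurable_realfun.
Set Implicit Arguments. Unset Strict Implicit. Unset Printing Implicit Defensive.
Import Order.TTheory GRing.Theory Num.Theory.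
Import numFieldNormedType.Exports HBNNSimple.
Local Open Scope classical_set_scope.
Local Open Scope ring_scope.

(* Measure bound: for fixed w the map r |-> W (w, r) has slope at least beta,
   so each band A_j meets the fibre over w in a set of length O(eps_j / beta);
   integrating over Omega (mass 1) and summing over j gives a finite measure.
   Recurrence: along an orbit with limsup r_n = oo, W is unbounded (W grows at
   least linearly in r), so it crosses the level W_j + eps_j.  At the first
   crossing W is already of size about W_j, hence r is at least W_j / (4 delta)
   (W grows at most linearly in r), so the last jump is at most
   k (W_j / (4 delta)) < 2 eps_j for large j, and the point just before the
   crossing lies in A_j. *)

Section halfline_increments.
Variables (R : realType) (g : R -> R).
Hypothesis g_derivable : forall r, 0 < r -> derivable g r 1.

Lemma mvt_halfline a b : 0 < a -> a < b ->
  exists2 c, 0 < c & g b - g a = derive1 g c * (b - a).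
Proof.
move=> a0 ab.
have [c cab ->] : exists2 c, c \in `]a, b[ & g b - g a = derive1 g c * (b - a).
  apply: MVT => //.
    move=> x; rewrite in_itv /= => /andP[ax _].
    by rewrite derive1E; apply/derivableP/g_derivable/(lt_trans a0 ax).
  apply: derivable_within_continuous => x; rewrite in_itv /= => /andP[ax _].
  exact/g_derivable/(lt_le_trans a0 ax).
by move: cab; rewrite in_itv /= => /andP[ac _]; exists c => //; exact: lt_trans ac.
Qed.

Lemma derive1_ge_increment beta a b : (forall r, 0 < r -> beta <= derive1 g r) ->
  0 < a -> a <= b -> beta * (b - a) <= g b - g a.
Proof.
move=> gb a0; rewrite le_eqVlt => /predU1P[<-|ab]; first by rewrite !subrr mulr0.
have [c c0 ->] := mvt_halfline a0 ab.
by rewrite ler_wpM2r ?gb // subr_ge0 ltW.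
Qed.

Lemma derive1_le_increment delta a b : (forall r, 0 < r -> derive1 g r <= delta) ->
  0 < a -> a <= b -> g b - g a <= delta * (b - a).
Proof.
move=> gb a0; rewrite le_eqVlt => /predU1P[<-|ab]; first by rewrite !subrr mulr0.
have [c c0 ->] := mvt_halfline a0 ab.
by rewrite ler_wpM2r ?gb // subr_ge0 ltW.
Qed.

Lemma derive1_bounded_le_affine delta C r :
  (forall r, 0 < r -> 0 <= derive1 g r <= delta) -> `|g 1| <= C ->
  0 < r -> g r <= C + delta * r.
Proof.
move=> gb; rewrite ler_norml => /andP[_ g1C] r0.
have [g'0 g'delta] : (forall r, 0 < r -> 0 <= derive1 g r) /\
    (forall r, 0 < r -> derive1 g r <= delta).
  by split=> s /gb /andP[].
have delta0 : 0 <= delta by have /andP[+ +] := gb 1 ltr01; exact: le_trans.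
have [r1|r1] := leP 1 r.
  by have := derive1_le_increment g'delta ltr01 r1; nra.
by have := derive1_ge_increment g'0 r0 (ltW r1); nra.
Qed.

Lemma derive1_bounded_ge_affine beta C r :
  (forall r, 0 < r -> beta <= derive1 g r) -> `|g 1| <= C ->
  1 <= r -> beta * (r - 1) - C <= g r.
Proof.
move=> gb; rewrite ler_norml => /andP[Cg1 _] r1.
by have := derive1_ge_increment gb ltr01 r1; lra.
Qed.

End halfline_increments.

Lemma fibrewise_affine_bounds (R : realType) (T : Type) (W : T * R -> R)
    (beta delta C : R) :
  0 < beta -> (forall w r, 0 < r -> derivable (fun s => W (w, s)) r 1) ->
  (forall w r, 0 < r -> beta <= derive1 (fun s => W (w, s)) r <= delta) ->
  (forall w, `|W (w, 1)| <= C) ->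
  (forall q, 0 < q.2 -> W q <= C + delta * q.2) /\
  (forall q, 1 <= q.2 -> beta * (q.2 - 1) - C <= W q).
Proof.
move=> beta_gt0 W_derivable dW_bounds W1C; split=> -[w r] /= r_gt.
  apply: (@derive1_bounded_le_affine _ _ (W_derivable w) _ _ _ _ (W1C w) r_gt).
  move=> s s0; have /andP[bs ->] := dW_bounds w s s0.
  by rewrite (le_trans (ltW _) bs).
apply: (derive1_bounded_ge_affine (W_derivable w) _ (W1C w) r_gt).
by move=> s s0; have /andP[] := dW_bounds w s s0.
Qed.

Lemma limn_esup_pinfty_unbounded (R : realType) (u : nat -> R) :
  limn_esup (fun n => (u n)%:E) = +oo%E -> forall X, exists n, X < u n.
Proof.
move=> supu X; apply/not_existsP => Xu.
have uX n : u n <= X by rewrite leNgt; apply/negP/Xu.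
suff : (limn_esup (fun n => (u n)%:E) <= X%:E)%E by rewrite supu leye_eq.
rewrite limn_esup_lim; apply: lime_le; first exact: is_cvg_esups.
by apply: nearW => m; apply: ge_ereal_sup => _ [n _ <-]; rewrite lee_fin.
Qed.

Lemma exists_first_crossing (R : realType) (u : nat -> R) b :
  u 0%N <= b -> (exists n, b < u n) -> exists m, u m <= b < u m.+1.
Proof.
move=> u0b ex; have [[|m] bum minm] := ex_minnP ex; first by rewrite ltNge u0b in bum.
by exists m; rewrite bum leNgt andbT; apply/negP => /minm; rewrite ltnn.
Qed.

Lemma continuous_compact_bounded (R : realType) (T : topologicalType) (g : T -> R) :
  compact [set: T] -> continuous g -> exists2 C, 0 <= C & forall x, `|g x| <= C.
Proof.
move=> cT cg; have := continuous_compact (continuous_subspaceT cg) cT.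
move=> /compact_bounded/pinfty_ex_gt0[C C0 gC].
by exists C; [exact: ltW | move=> x; apply: gC; exists x].
Qed.

Section level_bands.
Variables (R : realType) (g : R -> R) (beta : R).
Hypothesis beta_gt0 : 0 < beta.
Hypothesis g_derivable : forall r, 0 < r -> derivable g r 1.
Hypothesis g'_ge : forall r, 0 < r -> beta <= derive1 g r.

Definition band (c e : R) := [set r : R | 0 < r /\ `|g r - c| <= e].

Lemma measurable_band c e : measurable (band c e).
Proof.
have cg : {in `]0, +oo[%classic, continuous g}.
  move=> r; rewrite in_setE /= in_itv /= andbT => r0.
  exact/differentiable_continuous/derivable1_diffP/g_derivable.
have := open_continuous_measurable_fun (@rray_open _ R 0) cg (measurable_itv _)
  (measurable_itv `[c - e, c + e]).
congr measurable; apply/funext => r /=; rewrite !in_itv /= andbT.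
by rewrite /band /= ler_distl.
Qed.

Lemma band_sub_itv c e r0 : band c e r0 ->
  band c e `<=` `[r0 - 2 * e / beta, r0 + 2 * e / beta]%classic.
Proof.
move=> [r00 Hr0] r [r_gt0 Hr]; rewrite /= in_itv /=.
have e0 : 0 <= e := le_trans (normr_ge0 _) Hr.
set w := 2 * e / beta; have w0 : 0 <= w by rewrite /w divr_ge0 ?mulr_ge0 // ltW.
have bw : beta * w = 2 * e by rewrite /w mulrC divfK // gt_eqF.
move: Hr0 Hr; rewrite !ler_distl => /andP[a1 a2] /andP[b1 b2].
have [rr|rr] := leP r0 r.
  have inc := derive1_ge_increment g_derivable g'_ge r00 rr.
  have : beta * (r - r0) <= beta * w by lra.
  by rewrite ler_pM2l //; lra.
have inc := derive1_ge_increment g_derivable g'_ge r_gt0 (ltW rr).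
have : beta * (r0 - r) <= beta * w by lra.
by rewrite ler_pM2l //; lra.
Qed.

Lemma lebesgue_measure_band_le c e : 0 < e ->
  (lebesgue_measure (band c e) <= (4 / beta * e)%:E)%E.
Proof.
move=> e0; have [[r0 Br0]|] := pselect (exists r, band c e r); last first.
  move=> /forallNP band0; have -> : band c e = set0.
    by apply/seteqP; split => r // /band0.
  by rewrite measure0 lee_fin mulr_ge0 ?divr_ge0 // ltW.
set w := 2 * e / beta; have w0 : 0 < w by rewrite divr_gt0 ?mulr_gt0.
apply: (@le_trans _ _ (lebesgue_measure (`[r0 - w, r0 + w]%classic : set R))).
  exact: (le_measure lebesgue_measure (mem_set (measurable_band c e))
    (mem_set (measurable_itv _)) (band_sub_itv Br0)).
rewrite lebesgue_measure_itv /= lte_fin ifT -?EFinD ?lee_fin; last lra.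
suff -> : r0 + w - (r0 - w) = 4 / beta * e by [].
by rewrite /w; field; rewrite gt_eqF.
Qed.

Lemma lebesgue_measure_bigcup_band_le (c e : nat -> R) : (forall j, 0 < e j) ->
  (lebesgue_measure (\bigcup_j band (c j) (e j)) <= \sum_(j <oo) (4 / beta * e j)%:E)%E.
Proof.
move=> e0; have mB j : measurable (band (c j) (e j)) by exact: measurable_band.
have := measure_sigma_subadditive lebesgue_measure mB (bigcupT_measurable _ mB).
move=> /(_ (@subset_refl _ _)) /le_trans; apply.
apply: lee_nneseries => [j _ _|j _]; first exact: measure_ge0.
exact: lebesgue_measure_band_le.
Qed.

End level_bands.

Lemma product_measure1_le_sections d1 d2 (T1 : measurableType d1)
    (T2 : measurableType d2) (R : realType) (mu : {measure set T1 -> \bar R})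
    (nu : set T2 -> \bar R) (A : set (T1 * T2)) (c : \bar R) :
  (forall x, 0 <= nu (xsection A x))%E -> (forall x, nu (xsection A x) <= c)%E ->
  ((mu \x nu) A <= c * mu setT)%E.
Proof.
move=> nu0 nuc; rewrite /product_measure1 ge0_integralTE //.
apply: ge_ereal_sup => _ [h hle <-]; rewrite -integralT_nnsfun.
apply: le_trans (_ : \int[mu]_x (cst c x) <= _)%E; last by rewrite integral_cst.
apply: ge0_le_integral => //.
- by move=> x _; rewrite lee_fin; exact: fun_ge0.
- by apply/measurable_EFinP; exact: measurable_funP.
- by move=> x _; exact: le_trans (hle x) (nuc x).
Qed.

Section orbit_crossing.
Variables (R : realType) (T : Type) (W : T * R -> R) (beta delta C : R).
Hypothesis beta_gt0 : 0 < beta.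
Hypothesis delta_gt0 : 0 < delta.
Hypothesis W_le_affine : forall q, 0 < q.2 -> W q <= C + delta * q.2.
Hypothesis W_ge_affine : forall q, 1 <= q.2 -> beta * (q.2 - 1) - C <= W q.

Variables (q : nat -> T * R) (k : R -> R) (M : R).
Hypothesis q_pos : forall n, 0 < (q n).2.
Hypothesis q_unbounded : forall X, exists n, X < (q n).2.
Hypothesis W_step : forall n, W (q n.+1) <= W (q n) + k (q n).2.
Hypothesis k_decr : {in `]0, +oo[ &, {homo k : x y /~ x <= y}}.
Hypothesis k_le : forall r, 0 < r -> k r <= M.

Lemma W_orbit_unbounded X : exists n, X < W (q n).
Proof.
have [n Xn] := q_unbounded (1 + `|X + C| / beta); exists n.
have /W_ge_affine : 1 <= (q n).2.
  by have := divr_ge0 (normr_ge0 (X + C)) (ltW beta_gt0); lra.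
have : `|X + C| / beta < (q n).2 - 1 by lra.
by rewrite ltr_pdivrMr // => XCn; have := ler_norm (X + C); nra.
Qed.

Variables (eps Wj : nat -> R).
Hypothesis eps_gt0 : forall j, 0 < eps j.
Hypothesis Wj_cvgy : Wj @ \oo --> +oo.
Hypothesis eps_k_cvg0 : (fun j => (eps j)^-1 * k (Wj j / (4 * delta))) @ \oo --> 0.

Lemma orbit_meets_level_band : exists K j, 0 < (q K).2 /\ `|W (q K) - Wj j| <= eps j.
Proof.
have ek_lt2 : \forall j \near \oo, (eps j)^-1 * k (Wj j / (4 * delta)) < 2.
  by apply: (cvgr_lt 0 eps_k_cvg0).
have Wj_gt x : \forall j \near \oo, x < Wj j by apply: (cvgry_gt Wj_cvgy).
have [j [[[kj Wj_gt0] Wq0] MCj]] := filter_ex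
  (filterI (filterI (filterI ek_lt2 (Wj_gt 0)) (Wj_gt (W (q 0%N))))
    (Wj_gt (4 * (M + C)))).
have ej := eps_gt0 j.
have Wq0_le : W (q 0%N) <= Wj j + eps j by lra.
have [m /andP[Wqm Wqm1]] := exists_first_crossing (u := fun n => W (q n))
  Wq0_le (W_orbit_unbounded (Wj j + eps j)).
have step := W_step m; have kM := k_le (q_pos m); have Wq := W_le_affine (q_pos m).
have w0 : 0 < Wj j / (4 * delta) by rewrite divr_gt0 ?mulr_gt0.
have qm_big : Wj j / (4 * delta) <= (q m).2 by rewrite ler_pdivrMr ?mulr_gt0 //; nra.
have k_small : k (q m).2 < 2 * eps j.
  apply: le_lt_trans (k_decr _ _ qm_big) _; rewrite ?in_itv /= ?andbT ?q_pos //.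
  by move: kj; rewrite mulrC ltr_pdivrMr.
by exists m, j; split; [exact: q_pos | rewrite ler_distl; apply/andP; split; lra].
Qed.

End orbit_crossing.

Theorem lemma4p3 (R : realType) (Om : topologicalZmodType)
  (Om_compact : compact [set: Om]) (Om_metr : @metrizable_space R Om)
  (psi : {additive R -> Om}) (psi_cont : continuous psi)
  (psi_dense : closure (range psi) = [set: Om])
  (mu : probability (borelT Om) R)
  (mu_haar : forall (A : set (borelT Om)) (x : Om), measurable A ->
     mu [set x + y | y in A] = mu A)
  (D : set (Om * R)) (D_open : open D) (D_pos : D `<=` [set p | 0 < p.2])
  (f : Om * R -> Om * R)
  (f_cont : {within D, continuous f}) (f_inj : {in D &, injective f})
  (f_pos : forall p, D p -> 0 < (f p).2)
  (f_mp : forall B : set (borelT Om * R)%type, measurable B -> B `<=` D ->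
     (mu \x lebesgue_measure)%E (f @` B) = (mu \x lebesgue_measure)%E B)
  (W : Om * R -> R) (W_C1 : C1psi_prod psi W)
  (beta delta : R) (beta_pos : 0 < beta) (delta_pos : 0 < delta)
  (dW_bounds : forall w r, 0 < r ->
     beta <= derive1 (fun s => W (w, s)) r <= delta)
  (k : R -> R)
  (k_decr : {in `]0, +oo[ &, {homo k : x y /~ x <= y}})
  (k_bdd : exists M : R, forall r, 0 < r -> `|k r| <= M)
  (k_lim : k x @[x --> +oo] --> 0)
  (W_f : forall p, D p -> W (f p) <= W p + k p.2)
  (eps Wj : nat -> R) (eps_pos : forall j, 0 < eps j) (Wj_pos : forall j, 0 < Wj j)
  (eps_sum : (\sum_(0 <= j <oo) (eps j)%:E < +oo)%E)
  (Wj_lim : Wj @ \oo --> +oo)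
  (ek_lim : (fun j => (eps j)^-1 * k (Wj j / (4 * delta))) @ \oo --> 0) :
  let A := \bigcup_j [set p : Om * R | 0 < p.2 /\ `|W p - Wj j| <= eps j] in
  ((mu \x lebesgue_measure)%E A < +oo)%E /\
  (forall p, Uset f D p -> exists K : nat, A (iter K f p)).
Proof.
move=> A.
have W_derivable w r : 0 < r -> derivable (fun s => W (w, s)) r 1.
  exact: (W_C1.2 w).1.
have [C _ W1C] := continuous_compact_bounded Om_compact (W_C1.1 1 ltr01).1.
have dW_ge w s : 0 < s -> beta <= derive1 (fun s => W (w, s)) s.
  by move=> s0; have /andP[] := dW_bounds w s s0.
have [W_le_affine W_ge_affine] :=
  fibrewise_affine_bounds beta_pos W_derivable dW_bounds W1C.
split.
  have xsectionA w : xsection A w =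
      \bigcup_j band (fun r => W (w, r)) (Wj j) (eps j).
    by apply/funext => r; rewrite /xsection /= in_setE.
  apply: le_lt_trans (product_measure1_le_sections _ _ _) _.
  - by move=> w; exact: measure_ge0.
  - move=> w; rewrite xsectionA.
    exact: (lebesgue_measure_bigcup_band_le beta_pos (W_derivable w) (dW_ge w)
      Wj eps_pos).
  - rewrite [X in (_ * X)%E](_ : _ = 1%E); last exact: probability_setT.
    rewrite mule1 (eq_eseriesr (fun j _ => EFinM (4 / beta) (eps j))).
    rewrite nneseriesZl; last by move=> j _; rewrite lee_fin ltW.
    by rewrite lte_mul_pinfty // lee_fin divr_ge0 // ltW.
move=> p [Dp /limn_esup_pinfty_unbounded r_unbounded].
have [M kM] := k_bdd.
have k_le r : 0 < r -> k r <= M by move=> /kM; exact: le_trans (ler_norm _).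
have [K [j Bj]] := orbit_meets_level_band beta_pos delta_pos W_le_affine W_ge_affine
  (fun n => D_pos _ (Dp n)) r_unbounded (fun n => W_f _ (Dp n)) k_decr k_le eps_pos
  Wj_lim ek_lim.
by exists K, j.
Qed.
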